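(* Let $\star$ be a $t$-definer, let $n\ge1$ and let $(X_1,d_1^\star),\dots,(X_n,d_n^\star)$ be nonempty $\star$-metric spaces, and let $X=\prod_{i=1}^n X_i$. For $x=(x_i)$, $y=(y_i)\in X$ define $d_T^\star(x,y)=d_1^\star(x_1,y_1)\star\cdots\star d_n^\star(x_n,y_n)$ and $d_{\max}^\star(x,y)=\max_{1\le i\le n}d_i^\star(x_i,y_i)$. Then: (1) $(X,d_T^\star)$ is complete if and only if every $(X_i,d_i^\star)$ is complete; (2) $(X,d_{\max}^\star)$ is complete if and only if every $(X_i,d_i^\star)$ is complete.
   Context: A $t$-definer is a function $\star:[0,\infty)\times[0,\infty)\to[0,\infty)$ such that for all $a,b,c\ge 0$: $a\star b=b\star a$; $a\star(b\star c)=(a\star b)\star c$; if $a\le b$ then $a\star c\le b\star c$; $a\star 0=a$; and $\star$ is continuous in its first variable with respect to the Euclidean topology. Given a nonempty set $Y$, a $\star$-metric on $Y$ is a function $\rho:Y\times Y\to[0,\infty)$ such that for all $x,y,z\in Y$: $\rho(x,y)=0$ iff $x=y$; $\rho(x,y)=\rho(y,x)$; and $\rho(x,y)\le \rho(x,z)\star \rho(z,y)$. Both $d_T^\star$ and $d_{\max}^\star$ are $\star$-metrics on $X$. In $(Y,\rho)$, a sequence $\{x_n\}$ is Cauchy if for every $\epsilon>0$ there is $k$ with $\rho(x_n,x_m)<\epsilon$ for all $m,n\ge k$; it converges to $x$ if for every $\epsilon>0$ there is $k$ with $\rho(x,x_n)<\epsilon$ for $n\ge k$; $(Y,\rho)$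 is complete if every Cauchy sequence converges to a point of $Y$. *)

From Stdlib Require Import Reals.
From mathcomp Require Import all_boot.

Set Implicit Arguments.
Unset Strict Implicit.
Unset Printing Implicit Defensive.

Local Open Scope R_scope.

(* A t-definer: an operation on [0,oo), modelled as R -> R -> R whose
   axioms are required on nonnegative arguments, and which maps
   [0,oo) x [0,oo) into [0,oo). *)
Definition is_tdefiner (star : R -> R -> R) : Prop :=
  (forall a b, 0 <= a -> 0 <= b -> 0 <= star a b) /\
  (forall a b, 0 <= a -> 0 <= b -> star a b = star b a) /\
  (forall a b c, 0 <= a -> 0 <= b -> 0 <= c ->
     star a (star b c) = star (star a b) c) /\
  (forall a b c, 0 <= a -> 0 <= b -> 0 <= c -> a <= b -> star a c <= star b c) /\
  (forall a, 0 <= a -> star a 0 = a) /\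
  (forall c a, 0 <= c -> 0 <= a -> forall eps, 0 < eps ->
     exists delta, 0 < delta /\
       forall a', 0 <= a' -> Rabs (a' - a) < delta ->
         Rabs (star a' c - star a c) < eps).

Definition is_star_metric (star : R -> R -> R) {Y : Type} (rho : Y -> Y -> R)
  : Prop :=
  (forall x y, 0 <= rho x y) /\
  (forall x y, rho x y = 0 <-> x = y) /\
  (forall x y, rho x y = rho y x) /\
  (forall x y z, rho x y <= star (rho x z) (rho z y)).

Definition cauchy_seq {Y : Type} (rho : Y -> Y -> R) (u : nat -> Y) : Prop :=
  forall eps, 0 < eps -> exists k : nat,
    forall m n : nat, (k <= m)%nat -> (k <= n)%nat -> rho (u n) (u m) < eps.

Definition converges_to {Y : Type} (rho : Y -> Y -> R) (u : nat -> Y) (x : Y)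
  : Prop :=
  forall eps, 0 < eps -> exists k : nat,
    forall n : nat, (k <= n)%nat -> rho x (u n) < eps.

Definition complete_space {Y : Type} (rho : Y -> Y -> R) : Prop :=
  forall u : nat -> Y, cauchy_seq rho u -> exists x : Y, converges_to rho u x.

(* d_T(x,y) = d_1(x_1,y_1) * ... * d_n(x_n,y_n), computed as the right fold
   with unit 0 (a * 0 = a). *)
Definition dT (star : R -> R -> R) {n : nat} {X : 'I_n -> Type}
  (d : forall i, X i -> X i -> R) (x y : forall i, X i) : R :=
  \big[star/0]_(i < n) d i (x i) (y i).

Definition dmax {n : nat} {X : 'I_n -> Type}
  (d : forall i, X i -> X i -> R) (x y : forall i, X i) : R :=
  \big[Rmax/0]_(i < n) d i (x i) (y i).

From Stdlib Require Import Reals Lra.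
From mathcomp Require Import all_boot.

(* Both distances dominate every coordinate distance, and they are small as
   soon as all coordinate distances are small (for d_T this is continuity of
   the t-definer at 0, iterated n times).  Hence a sequence is Cauchy
   (convergent) in the product iff all its coordinate sequences are; the
   converse direction embeds X_i into the product by freezing the other
   coordinates at a base point.  Since max is itself a t-definer, d_max is
   the case star = max of d_T. *)

Local Open Scope R_scope.

Section ProductCompleteness.

Variables (n : nat) (X : 'I_n -> Type) (d : forall i, X i -> X i -> R).
Variable D : (forall i, X i) -> (forall i, X i) -> R.

Hypothesis coord_le :
  forall i (x y : forall j, X j), d i (x i) (y i) <= D x y.
Hypothesis small_of_coord_small : forall eps, 0 < eps ->
  exists2 del, 0 < del &
    forall x y : forall j, X j, (forall i, d i (x i) (y i) < del) -> D x y < eps.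

Lemma cauchy_seq_coord {u : nat -> forall i, X i} i :
  cauchy_seq D u -> cauchy_seq (d i) (fun k => u k i).
Proof.
move=> hu eps eps_gt0; have [k hk] := hu eps eps_gt0.
by exists k => m p hm hp; apply: Rle_lt_trans (hk m p hm hp).
Qed.

Lemma converges_to_coordwise {u : nat -> forall i, X i} {x} :
  (forall i, converges_to (d i) (fun k => u k i) (x i)) -> converges_to D u x.
Proof.
move=> hx eps eps_gt0; have [del del_gt0 hdel] := small_of_coord_small _ eps_gt0.
have [K hK] := fin_all_exists (fun i => hx i del del_gt0).
exists (\max_(i < n) K i) => m hm; apply: hdel => i.
by apply: hK; apply: leq_trans (leq_bigmax i) hm.
Qed.

Lemma cauchy_seq_dfwith (a : forall i, X i) {i} {u : nat -> X i} :
  (forall j, d j (a j) (a j) = 0) ->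
  cauchy_seq (d i) u -> cauchy_seq D (fun k => dfwith a (u k)).
Proof.
move=> da0 hu eps eps_gt0; have [del del_gt0 hdel] := small_of_coord_small _ eps_gt0.
have [k hk] := hu del del_gt0.
exists k => m p hm hp; apply: hdel => j.
case: (eqVneq i j) => [<-|ij]; first by rewrite !dfwith_in; apply: hk.
by rewrite !dfwith_out // da0.
Qed.

Lemma complete_space_prod_iff :
  (forall i, inhabited (X i)) -> (forall i x, d i x x = 0) ->
  complete_space D <-> (forall i, complete_space (d i)).
Proof.
move=> inhX d0; split=> [hD i u hu | hd u hu].
- have inh_pt j : exists x : X j, True by case: (inhX j) => x; exists x.
  have [a _] := fin_all_exists inh_pt.
  have [x hx] := hD _ (cauchy_seq_dfwith a (fun j => d0 j (a j)) hu).
  exists (x i) => eps eps_gt0; have [k hk] := hx eps eps_gt0.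
  exists k => m hm; apply: Rle_lt_trans (hk m hm).
  by have := coord_le i x (dfwith a (u m)); rewrite dfwith_in.
- have [x hx] := fin_all_exists (fun i => hd i _ (cauchy_seq_coord i hu)).
  by exists x; apply: converges_to_coordwise.
Qed.

End ProductCompleteness.

Section TDefiner.

Variable star : R -> R -> R.
Hypothesis star_tdefiner : is_tdefiner star.

Lemma star_ge0 a b : 0 <= a -> 0 <= b -> 0 <= star a b.
Proof. by case: star_tdefiner => H _; apply: H. Qed.

Lemma starC a b : 0 <= a -> 0 <= b -> star a b = star b a.
Proof. by case: star_tdefiner => _ [H _]; apply: H. Qed.

Lemma star_monol a b c : 0 <= a -> 0 <= b -> 0 <= c -> a <= b ->
  star a c <= star b c.
Proof. by case: star_tdefiner => _ [_ [_ [H _]]]; apply: H. Qed.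

Lemma star_0r a : 0 <= a -> star a 0 = a.
Proof. by case: star_tdefiner => _ [_ [_ [_ [H _]]]]; apply: H. Qed.

Lemma star_0l a : 0 <= a -> star 0 a = a.
Proof. by move=> a_ge0; rewrite starC ?star_0r //; apply: Rle_refl. Qed.

Lemma star_monor a b c : 0 <= a -> 0 <= b -> 0 <= c -> b <= c ->
  star a b <= star a c.
Proof.
by move=> *; rewrite (starC a b) // (starC a c) //; apply: star_monol.
Qed.

Lemma star_ge_l a b : 0 <= a -> 0 <= b -> a <= star a b.
Proof.
by move=> a_ge0 b_ge0; rewrite -{1}(star_0r _ a_ge0); apply: star_monor => //; lra.
Qed.

Lemma star_ge_r a b : 0 <= a -> 0 <= b -> b <= star a b.
Proof. by move=> a_ge0 b_ge0; rewrite starC //; apply: star_ge_l. Qed.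

(* Continuity of [star _ (eps/2)] at 0, where it equals eps/2, plus
   monotonicity in the second argument. *)
Lemma star_small eps : 0 < eps -> exists2 del, 0 < del &
  forall a b, 0 <= a -> a < del -> 0 <= b -> b < del -> star a b < eps.
Proof.
move=> eps_gt0; case: star_tdefiner => _ [_ [_ [_ [_ star_cont]]]].
have [del [del_gt0 hdel]] :=
  star_cont (eps / 2) 0 ltac:(lra) (Rle_refl 0) (eps / 2) ltac:(lra).
exists (Rmin del (eps / 2)); first by apply: Rmin_glb_lt; lra.
move=> a b a_ge0 a_lt b_ge0 b_lt.
have := Rmin_l del (eps / 2); have := Rmin_r del (eps / 2) => ? ?.
have : star a b <= star a (eps / 2) by apply: star_monor => //; lra.
have := hdel a a_ge0 ltac:(rewrite Rminus_0_r Rabs_right; lra).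
by rewrite star_0l; [move/Rabs_def2; lra | lra].
Qed.

Lemma big_star_ge0 {I : Type} (r : seq I) (F : I -> R) :
  (forall j, 0 <= F j) -> 0 <= \big[star/0]_(j <- r) F j.
Proof.
move=> F_ge0; elim: r => [|x r IH]; first by rewrite big_nil; apply: Rle_refl.
by rewrite big_cons; apply: star_ge0.
Qed.

Lemma big_star_ge {I : eqType} (r : seq I) (F : I -> R) j :
  (forall j, 0 <= F j) -> j \in r -> F j <= \big[star/0]_(k <- r) F k.
Proof.
move=> F_ge0; elim: r => [|x r IH] //; rewrite in_cons big_cons.
case/orP=> [/eqP ->|j_r]; first by apply: star_ge_l => //; apply: big_star_ge0.
by apply: Rle_trans (IH j_r) _; apply: star_ge_r => //; apply: big_star_ge0.
Qed.

Lemma big_star_small {I : Type} (r : seq I) eps : 0 < eps ->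
  exists2 del, 0 < del & forall F : I -> R,
    (forall j, 0 <= F j) -> (forall j, F j < del) ->
    \big[star/0]_(k <- r) F k < eps.
Proof.
elim: r eps => [|x r IH] eps eps_gt0.
  by exists 1 => [|F _ _]; [lra | rewrite big_nil].
have [del0 del0_gt0 hdel0] := star_small _ eps_gt0.
have [del1 del1_gt0 hdel1] := IH _ del0_gt0.
exists (Rmin del0 del1) => [|F F_ge0 F_lt]; first by apply: Rmin_glb_lt.
have := Rmin_l del0 del1; have := Rmin_r del0 del1 => ? ?.
rewrite big_cons; apply: hdel0 => //; first by have := F_lt x; lra.
- exact: big_star_ge0.
- by apply: hdel1 => // j; have := F_lt j; lra.
Qed.

Lemma complete_dT_iff (n : nat) (X : 'I_n -> Type)
    (d : forall i, X i -> X i -> R) :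
  (forall i, inhabited (X i)) ->
  (forall i x y, 0 <= d i x y) -> (forall i x, d i x x = 0) ->
  complete_space (dT star d) <-> (forall i, complete_space (d i)).
Proof.
move=> inhX d_ge0 d0; apply: complete_space_prod_iff => // [i x y|eps eps_gt0].
  by apply: (big_star_ge _ (fun j => d j (x j) (y j)) i) => //; apply: mem_index_enum.
have [del del_gt0 hdel] := big_star_small (index_enum 'I_n) _ eps_gt0.
by exists del => // x y hxy; apply: hdel.
Qed.

End TDefiner.

Lemma Rmax_tdefiner : is_tdefiner Rmax.
Proof.
split; [|split; [|split; [|split; [|split]]]].
- by move=> a b a_ge0 _; apply: Rle_trans a_ge0 (Rmax_l a b).
- by move=> a b _ _; apply: Rmax_comm.
- by move=> a b c _ _ _; rewrite Rmax_assoc.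
- by move=> a b c _ _ _ ab; apply: Rle_max_compat_r.
- by move=> a a_ge0; apply: Rmax_left.
- move=> c a _ _ eps eps_gt0; exists eps; split=> // a' _ /Rabs_def2 [? ?].
  by apply: Rabs_def1; unfold Rmax; repeat destruct Rle_dec; lra.
Qed.

Theorem theorem4p12 (star : R -> R -> R) (n : nat) (X : 'I_n -> Type)
  (d : forall i : 'I_n, X i -> X i -> R) :
  is_tdefiner star ->
  (0 < n)%N ->
  (forall i, inhabited (X i)) ->
  (forall i, is_star_metric star (d i)) ->
  (complete_space (dT star d) <-> (forall i, complete_space (d i))) /\
  (complete_space (dmax d) <-> (forall i, complete_space (d i))).
Proof.
(* For n = 0 both sides of each equivalence hold trivially. *)
move=> star_tdefiner _ inhX d_metric.
have d_ge0 i : forall x y, 0 <= d i x y by case: (d_metric i).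
have d0 i x : d i x x = 0 by case: (d_metric i) => _ [/(_ x x) [_ ->]].
split; first exact: complete_dT_iff.
exact: (complete_dT_iff _ Rmax_tdefiner).
Qed.
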